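(* Let $H^0(\mathcal A_\theta^{alg},{}_{\omega}\mathcal A_\theta^{alg\ast})$ be the space of formal series $\varphi=\sum_{(n,m)\in\mathbb Z^2}\varphi_{n,m}U_1^nU_2^m$ satisfying $(\omega\cdot a)\varphi=\varphi a$ for all $a\in\mathcal A_\theta^{alg}$. Then every such $\varphi$ is determined by the three coefficients $\varphi_{0,0},\varphi_{0,1},\varphi_{0,-1}$ (which generate the space), and its coefficients satisfy: if $m-n\equiv 0\pmod 3$ then $\varphi_{n,m}=\lambda^{\frac{m^2+n^2+4mn}{6}}\varphi_{0,0}$; if $m-n\equiv\pm1\pmod 3$ then $\varphi_{n,m}=\lambda^{\frac{m^2+n^2+4mn-1}{6}}\varphi_{0,\pm1}$.
   Context: Let $\theta\in\mathbb R\setminus\mathbb Q$, $\lambda=e^{2\pi i\theta}$, and $\lambda^s:=e^{2\pi i\theta s}$ for $s\in\mathbb R$. $\mathcal A_\theta^{alg}$ is the complex algebra of finite sums $\sum a_{n,m}U_1^nU_2^m$ with $U_1,U_2$ invertible and $U_2U_1=\lambda U_1U_2$. $\mathcal A_\theta^{alg\ast}$ denotes the space of all formal series $\sum_{(n,m)\in\mathbb Z^2}\varphi_{n,m}U_1^nU_2^m$ (arbitrary complex coefficients); it is an $\mathcal A_\theta^{alg}$-bimodule via left and right multiplication by elements of $\mathcal A_\theta^{alg}$ using the relation $U_2U_1=\lambda U_1U_2$. $\omega$ denotes the automorphism of $\mathcal A_\theta^{alg}$ with $\omega\cdot U_1=U_2^{-1}$, $\omega\cdot U_2=\lambda^{-1/2}U_1U_2^{-1}$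 (the action of $\begin{pmatrix}0&1\\-1&-1\end{pmatrix}\in SL(2,\mathbb Z)$). ${}_\omega\mathcal A_\theta^{alg\ast}$ is $\mathcal A_\theta^{alg\ast}$ with bimodule structure $a\cdot\varphi=(\omega\cdot a)\varphi$, $\varphi\cdot a=\varphi a$. *)

From Stdlib Require Import Reals ZArith List.
From Coquelicot Require Export Coquelicot.
Open Scope R_scope.

(* lambda^s := e^{2 pi i theta s} for real s *)
Definition lam (theta s : R) : Coquelicot.Complex.C := (cos (2 * PI * theta * s), sin (2 * PI * theta * s)).

Definition irrational (theta : R) : Prop :=
  forall (p q : Z), q <> 0%Z -> theta * IZR q <> IZR p.

(* A monomial c * U1^n U2^m is represented as (c, (n, m)). *)
Definition mono := (Coquelicot.Complex.C * (Z * Z))%type.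

(* Product of monomials using U2 U1 = lambda U1 U2:
   U1^n U2^m U1^n' U2^m' = lambda^{m n'} U1^{n+n'} U2^{m+m'} *)
Definition mmul (theta : R) (x y : mono) : mono :=
  let '(c, (n, m)) := x in let '(c', (n', m')) := y in
  (Cmult (Cmult c c') (lam theta (IZR (m * n'))), ((n + n')%Z, (m + m')%Z)).

Definition mone : mono := (RtoC 1, (0%Z, 0%Z)).

(* inverse of an (invertible, c <> 0) monomial:
   (c U1^n U2^m)^{-1} = c^{-1} lambda^{nm} U1^{-n} U2^{-m} *)
Definition minv (theta : R) (x : mono) : mono :=
  let '(c, (n, m)) := x in
  (Cmult (Cinv c) (lam theta (IZR (n * m))), ((- n)%Z, (- m)%Z)).

Fixpoint mpow_nat (theta : R) (x : mono) (k : nat) : mono :=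
  match k with
  | O => mone
  | S k' => mmul theta x (mpow_nat theta x k')
  end.

Definition mpow (theta : R) (x : mono) (k : Z) : mono :=
  if (0 <=? k)%Z then mpow_nat theta x (Z.to_nat k)
  else mpow_nat theta (minv theta x) (Z.to_nat (- k)).

(* omega on generators: omega U1 = U2^{-1}, omega U2 = lambda^{-1/2} U1 U2^{-1} *)
Definition omega_U1 : mono := (RtoC 1, (0%Z, (-1)%Z)).
Definition omega_U2 (theta : R) : mono := (lam theta (- / 2), (1%Z, (-1)%Z)).

Definition omega_mono (theta : R) (x : mono) : mono :=
  let '(c, (n, m)) := x in
  let '(d, nm) := mmul theta (mpow theta omega_U1 n) (mpow theta (omega_U2 theta) m) in
  (Cmult c d, nm).

(* An element of A_theta^alg is a finite sum of monomials. *)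
Definition Aalg := list mono.

Definition omega (theta : R) (a : Aalg) : Aalg := map (omega_mono theta) a.

(* Formal series sum phi_{n,m} U1^n U2^m, arbitrary coefficients. *)
Definition series := Z -> Z -> Coquelicot.Complex.C.

Definition series_zero : series := fun _ _ => RtoC 0.
Definition series_add (f g : series) : series := fun n m => Cplus (f n m) (g n m).

Definition lmul_mono (theta : R) (x : mono) (phi : series) : series :=
  let '(c, (a, b)) := x in
  fun n m => Cmult (Cmult c (lam theta (IZR (b * (n - a)))))
                   (phi (n - a)%Z (m - b)%Z).

Definition rmul_mono (theta : R) (phi : series) (x : mono) : series :=
  let '(c, (a, b)) := x in
  fun n m => Cmult (Cmult c (lam theta (IZR ((m - b) * a))))
                   (phi (n - a)%Z (m - b)%Z).

Definition lmul (theta : R) (a : Aalg) (phi : series) : series :=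
  fold_right (fun x acc => series_add (lmul_mono theta x phi) acc) series_zero a.

Definition rmul (theta : R) (phi : series) (a : Aalg) : series :=
  fold_right (fun x acc => series_add (rmul_mono theta phi x) acc) series_zero a.

Definition H0 (theta : R) (phi : series) : Prop :=
  forall a : Aalg, lmul theta (omega theta a) phi = rmul theta phi a.

(* Conjugating a series by the gauge [lam (gauge_exp n m)], where
   [gauge_exp n m = (m^2 + n^2 + 4mn - e^2) / 6] and [e] is the representative
   of [m - n] mod 3 in {0, 1, -1}, turns the equation [(omega . a) phi = phi a]
   for a monomial [a = U1^a U2^b] into the equality of the gauged coefficients
   at [(n - b, m + a + b)] and [(n - a, m - b)].  For [a = U1] and [a = U2]
   these are translations by (1,1) and (-1,2), which generate the lattice
   [{(x, y) | y = x mod 3}]; so the gauged coefficients depend only on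
   [m - n] mod 3, and each of the three classes can be prescribed freely. *)
From Stdlib Require Import Reals ZArith List Lia Lra FunctionalExtensionality.
Open Scope R_scope.

Lemma lam_add t s u : Cmult (lam t s) (lam t u) = lam t (s + u).
Proof.
  unfold lam, Cmult; simpl.
  replace (2 * PI * t * (s + u)) with (2 * PI * t * s + 2 * PI * t * u) by ring.
  rewrite cos_plus, sin_plus. f_equal; ring.
Qed.

Lemma lam_zero t : lam t 0 = RtoC 1.
Proof. unfold lam, RtoC. rewrite Rmult_0_r, cos_0, sin_0. reflexivity. Qed.

Lemma lam_inv t s : Cinv (lam t s) = lam t (- s).
Proof.
  unfold lam, Cinv; simpl.
  replace (2 * PI * t * - s) with (- (2 * PI * t * s)) by ring.
  rewrite cos_neg, sin_neg.
  pose proof (sin2_cos2 (2 * PI * t * s)) as Hpyth. unfold Rsqr in Hpyth.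
  replace (cos (2 * PI * t * s) * (cos (2 * PI * t * s) * 1) +
    sin (2 * PI * t * s) * (sin (2 * PI * t * s) * 1)) with 1 by lra.
  f_equal; field.
Qed.

Lemma lam_mult_cancel t s x y : Cmult (lam t s) x = Cmult (lam t s) y -> x = y.
Proof.
  intros Hxy.
  assert (Hinv : Cmult (lam t (- s)) (lam t s) = RtoC 1)
    by (rewrite lam_add, Rplus_opp_l; apply lam_zero).
  rewrite <- (Cmult_1_l x), <- (Cmult_1_l y), <- Hinv, <- !Cmult_assoc, Hxy.
  reflexivity.
Qed.

Definition pow_exp (s : R) (a b k : Z) : R :=
  IZR k * s + IZR a * IZR b * IZR k * (IZR k - 1) / 2.

Lemma mpow_nat_lam t s a b k :
  mpow_nat t (lam t s, (a, b)) k =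
  (lam t (pow_exp s a b (Z.of_nat k)), (Z.of_nat k * a, Z.of_nat k * b)%Z).
Proof.
  unfold pow_exp. induction k as [|k IH]; cbn [mpow_nat].
  - unfold mone. rewrite <- (lam_zero t). do 2 f_equal. simpl. field.
  - rewrite IH. unfold mmul. f_equal.
    + rewrite !lam_add. f_equal.
      rewrite Nat2Z.inj_succ, succ_IZR, !mult_IZR. field.
    + f_equal; lia.
Qed.

Lemma minv_lam t s a b : minv t (lam t s, (a, b)) = (lam t (IZR (a * b) - s), ((- a)%Z, (- b)%Z)).
Proof. unfold minv. rewrite lam_inv, lam_add. do 2 f_equal. ring. Qed.

Lemma mpow_lam t s a b k : mpow t (lam t s, (a, b)) k = (lam t (pow_exp s a b k), (k * a, k * b)%Z).
Proof.
  unfold mpow. destruct (Z.leb_spec 0 k).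
  - rewrite mpow_nat_lam, Z2Nat.id by lia. reflexivity.
  - rewrite minv_lam, mpow_nat_lam, Z2Nat.id by lia. f_equal.
    + unfold pow_exp. f_equal. rewrite mult_IZR, ?opp_IZR. field.
    + f_equal; lia.
Qed.

Lemma omega_mono_formula t c a b : omega_mono t (c, (a, b)) =
  (Cmult c (lam t (- IZR b ^ 2 / 2 - IZR a * IZR b)), (b, (- a - b)%Z)).
Proof.
  unfold omega_mono, omega_U1, omega_U2. rewrite <- (lam_zero t), !mpow_lam.
  unfold mmul, pow_exp. f_equal.
  - rewrite !lam_add. do 2 f_equal. rewrite !mult_IZR. field.
  - f_equal; lia.
Qed.

Lemma H0_monomialwise t phi :
  H0 t phi <-> forall x, lmul_mono t (omega_mono t x) phi = rmul_mono t phi x.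
Proof.
  split.
  - intros Hphi x. specialize (Hphi (x :: nil)).
    unfold lmul, rmul, omega, series_add, series_zero in Hphi. cbn [map fold_right] in Hphi.
    extensionality n; extensionality m.
    pose proof (f_equal (fun F => F n m) Hphi) as Hnm. cbv beta in Hnm.
    rewrite <- (Cplus_0_r (lmul_mono _ _ _ n m)), Hnm. apply Cplus_0_r.
  - intros Hmono a. unfold lmul, rmul, omega. induction a as [|x a IH].
    + reflexivity.
    + cbn [map fold_right]. rewrite Hmono, IH. reflexivity.
Qed.

Definition class_rep (n m : Z) : Z :=
  match ((m - n) mod 3)%Z with 0%Z => 0%Z | 1%Z => 1%Z | _ => (-1)%Z end.

Lemma class_rep_cases n m : (class_rep n m = 0 \/ class_rep n m = 1 \/ class_rep n m = -1)%Z.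
Proof. unfold class_rep. destruct ((m - n) mod 3)%Z as [|[]|]; auto. Qed.

Lemma class_rep_spec n m : exists j, (m - n = 3 * j + class_rep n m)%Z.
Proof.
  pose proof (Z.div_mod (m - n) 3 ltac:(lia)) as Hdiv.
  pose proof (Z.mod_pos_bound (m - n) 3 ltac:(lia)) as Hbound.
  unfold class_rep. destruct (Z.eq_dec ((m - n) mod 3) 2) as [E2 | N2].
  - exists ((m - n) / 3 + 1)%Z. rewrite E2 in *. lia.
  - exists ((m - n) / 3)%Z.
    assert (((m - n) mod 3 = 0 \/ (m - n) mod 3 = 1)%Z) as [E | E] by lia;
      rewrite E in *; lia.
Qed.

Lemma class_rep_translate a b n m : class_rep (n - b) (m + a + b) = class_rep (n - a) (m - b).
Proof.
  unfold class_rep.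
  replace (m + a + b - (n - b))%Z with ((m - b - (n - a)) + b * 3)%Z by ring.
  rewrite Z_mod_plus_full. reflexivity.
Qed.

Lemma class_rep_of_rep n m : class_rep 0 (class_rep n m) = class_rep n m.
Proof. destruct (class_rep_cases n m) as [E | [E | E]]; rewrite E; reflexivity. Qed.

Definition gauge_exp (n m : Z) : R :=
  (IZR (m * m) + IZR (n * n) + 4 * IZR (m * n) - IZR (class_rep n m) ^ 2) / 6.

Definition gauged t (phi : series) (n m : Z) : Complex.C :=
  Cmult (lam t (- gauge_exp n m)) (phi n m).

Lemma gauge_exp_rep n m : gauge_exp 0 (class_rep n m) = 0.
Proof. unfold gauge_exp. rewrite class_rep_of_rep, !mult_IZR. field. Qed.

Lemma ungauge t phi n m : phi n m = Cmult (lam t (gauge_exp n m)) (gauged t phi n m).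
Proof.
  unfold gauged. rewrite Cmult_assoc, lam_add, Rplus_opp_r, lam_zero.
  symmetry. apply Cmult_1_l.
Qed.

Lemma gauge_exp_translate a b n m :
  (- IZR b ^ 2 / 2 - IZR a * IZR b) + IZR ((- a - b) * (n - b)) + gauge_exp (n - b) (m + a + b)
  = IZR ((m - b) * a) + gauge_exp (n - a) (m - b).
Proof.
  unfold gauge_exp. rewrite class_rep_translate.
  set (e := IZR (class_rep (n - a) (m - b))).
  repeat rewrite ?mult_IZR, ?minus_IZR, ?plus_IZR, ?opp_IZR. field.
Qed.

Lemma lmul_omega_mono_gauged t phi c a b n m :
  lmul_mono t (omega_mono t (c, (a, b))) phi n m =
  Cmult (Cmult c (lam t (IZR ((m - b) * a) + gauge_exp (n - a) (m - b))))
        (gauged t phi (n - b) (m + a + b)).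
Proof.
  rewrite omega_mono_formula, <- gauge_exp_translate. unfold lmul_mono.
  replace (m - (- a - b))%Z with (m + a + b)%Z by ring.
  rewrite (ungauge t phi), <- !lam_add.
  ring_simplify. reflexivity.
Qed.

Lemma rmul_mono_gauged t phi c a b n m :
  rmul_mono t phi (c, (a, b)) n m =
  Cmult (Cmult c (lam t (IZR ((m - b) * a) + gauge_exp (n - a) (m - b))))
        (gauged t phi (n - a) (m - b)).
Proof.
  unfold rmul_mono. rewrite (ungauge t phi), <- lam_add. ring.
Qed.

Lemma H0_iff_gauged_invariant t phi :
  H0 t phi <-> forall a b n m, gauged t phi (n - b) (m + a + b) = gauged t phi (n - a) (m - b).
Proof.
  rewrite H0_monomialwise. split.
  - intros Hmono a b n m.
    pose proof (f_equal (fun F => F n m) (Hmono (RtoC 1, (a, b)))) as Hnm. cbv beta in Hnm.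
    rewrite lmul_omega_mono_gauged, rmul_mono_gauged, !Cmult_1_l in Hnm.
    exact (lam_mult_cancel _ _ _ _ Hnm).
  - intros Hinv [c [a b]]. extensionality n; extensionality m.
    rewrite lmul_omega_mono_gauged, rmul_mono_gauged, Hinv. reflexivity.
Qed.

Section LatticeInvariance.

Variable A : Type.
Variable F : Z -> Z -> A.

Lemma translate_iter dx dy :
  (forall n m, F (n + dx) (m + dy) = F n m) ->
  forall k n m, F (n + k * dx) (m + k * dy) = F n m.
Proof.
  intros Hstep k. induction k as [|k IH|k IH] using Z.peano_ind; intros n m.
  - rewrite !Z.mul_0_l, !Z.add_0_r. reflexivity.
  - replace (n + Z.succ k * dx)%Z with (n + k * dx + dx)%Z by ring.
    replace (m + Z.succ k * dy)%Z with (m + k * dy + dy)%Z by ring.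
    rewrite Hstep. apply IH.
  - rewrite <- (IH n m).
    replace (n + k * dx)%Z with (n + Z.pred k * dx + dx)%Z by (rewrite Z.mul_pred_l; ring).
    replace (m + k * dy)%Z with (m + Z.pred k * dy + dy)%Z by (rewrite Z.mul_pred_l; ring).
    symmetry. apply Hstep.
Qed.

Lemma invariant_mod3_lattice :
  (forall n m, F (n + 1) (m + 1) = F n m) ->
  (forall n m, F (n + -1) (m + 2) = F n m) ->
  forall e j n m, (m - n = 3 * j + e)%Z -> F n m = F 0 e.
Proof.
  intros H11 H12 e j n m Hnm.
  transitivity (F (0 + (n + j) * 1 + j * -1) (e + (n + j) * 1 + j * 2)).
  { f_equal; lia. }
  rewrite (translate_iter _ _ H12), (translate_iter _ _ H11). reflexivity.
Qed.

End LatticeInvariance.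

Lemma H0_coef_rep t phi : H0 t phi ->
  forall n m, phi n m = Cmult (lam t (gauge_exp n m)) (phi 0%Z (class_rep n m)).
Proof.
  rewrite H0_iff_gauged_invariant. intros Hinv n m.
  assert (H11 : forall x y, gauged t phi (x + 1) (y + 1) = gauged t phi x y).
  { intros x y. transitivity (gauged t phi (x + 1 - 0) (y + 1 + 0)); [f_equal; ring |].
    rewrite Hinv. f_equal; ring. }
  assert (H12 : forall x y, gauged t phi (x + -1) (y + 2) = gauged t phi x y).
  { intros x y. transitivity (gauged t phi (x - 1) (y + 1 + 0 + 1)); [f_equal; ring |].
    rewrite Hinv. f_equal; ring. }
  destruct (class_rep_spec n m) as [j Hj].
  rewrite (ungauge t phi n m), (invariant_mod3_lattice _ _ H11 H12 _ _ _ _ Hj).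
  unfold gauged. rewrite gauge_exp_rep, Ropp_0, lam_zero, Cmult_1_l. reflexivity.
Qed.

Definition from_reps t (c : Z -> Complex.C) : series :=
  fun n m => Cmult (lam t (gauge_exp n m)) (c (class_rep n m)).

Lemma from_reps_H0 t c : H0 t (from_reps t c).
Proof.
  assert (Hgauged : forall n m, gauged t (from_reps t c) n m = c (class_rep n m)).
  { intros n m. unfold gauged, from_reps.
    rewrite Cmult_assoc, lam_add, Rplus_opp_l, lam_zero. apply Cmult_1_l. }
  apply H0_iff_gauged_invariant. intros a b n m.
  rewrite !Hgauged, class_rep_translate. reflexivity.
Qed.

Lemma from_reps_rep t c e : (e = 0 \/ e = 1 \/ e = -1)%Z -> from_reps t c 0%Z e = c e.
Proof.
  intros He. unfold from_reps.
  assert (Hrep : class_rep 0 e = e) by (destruct He as [-> | [-> | ->]]; reflexivity).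
  rewrite Hrep, <- Hrep at 1.
  rewrite gauge_exp_rep, lam_zero. apply Cmult_1_l.
Qed.

Theorem mainTheorem3 (theta : R) (Htheta : irrational theta) :
  (* coefficient formulas for every phi in H^0 *)
  (forall phi : series, H0 theta phi ->
     forall n m : Z,
       (Z.modulo (m - n) 3 = 0%Z ->
          phi n m = Cmult (lam theta ((IZR (m*m) + IZR (n*n) + 4 * IZR (m*n)) / 6)) (phi 0%Z 0%Z)) /\
       (Z.modulo (m - n) 3 = 1%Z ->
          phi n m = Cmult (lam theta ((IZR (m*m) + IZR (n*n) + 4 * IZR (m*n) - 1) / 6)) (phi 0%Z 1%Z)) /\
       (Z.modulo (m - n) 3 = 2%Z ->
          phi n m = Cmult (lam theta ((IZR (m*m) + IZR (n*n) + 4 * IZR (m*n) - 1) / 6)) (phi 0%Z (-1)%Z)))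
  /\
  (* phi is determined by phi_{0,0}, phi_{0,1}, phi_{0,-1} *)
  (forall phi psi : series, H0 theta phi -> H0 theta psi ->
     phi 0%Z 0%Z = psi 0%Z 0%Z -> phi 0%Z 1%Z = psi 0%Z 1%Z ->
     phi 0%Z (-1)%Z = psi 0%Z (-1)%Z -> phi = psi)
  /\
  (* these three coefficients are free: they generate the (3-dim) space *)
  (forall c0 c1 c2 : Coquelicot.Complex.C, exists phi : series, H0 theta phi /\
     phi 0%Z 0%Z = c0 /\ phi 0%Z 1%Z = c1 /\ phi 0%Z (-1)%Z = c2).
Proof.
  split; [|split].
  - intros phi Hphi n m. rewrite (H0_coef_rep theta phi Hphi n m).
    unfold gauge_exp, class_rep.
    split; [|split]; intros Hq; rewrite Hq; do 2 f_equal; simpl; field.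
  - intros phi psi Hphi Hpsi E0 E1 E2. extensionality n; extensionality m.
    rewrite (H0_coef_rep theta phi Hphi), (H0_coef_rep theta psi Hpsi).
    destruct (class_rep_cases n m) as [E | [E | E]]; rewrite E; congruence.
  - intros c0 c1 c2.
    set (c e := if (e =? 0)%Z then c0 else if (e =? 1)%Z then c1 else c2).
    exists (from_reps theta c).
    repeat split; [apply from_reps_H0 | rewrite from_reps_rep; auto; lia ..].
Qed.
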